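(* Let $\alpha$ be a composition, $w\in CRHW_n$ with $w(\alpha)=\beta\neq0$, $\tau=\tau_w$, and let $j\ge1$ belong to $\mathrm{supp}(w)$ but not be its maximum. If $j\notin\mathrm{leg}(w)$, then the greatest entry of $\tau$ in column $j$ is strictly less than the smallest entry of $\tau$ in column $j+1$.
   Context: Box-adding operators on compositions $\alpha=(\alpha_1,\dots,\alpha_k)$: $\mathfrak t_1(\alpha)=(1,\alpha_1,\dots,\alpha_k)$ (a new row on top); for $i\ge2$, $\mathfrak t_i(\alpha)$ increases the leftmost part equal to $i-1$ by $1$ (adding a box in column $i$), and is $0$ if there is no such part; $\mathfrak t_i(0)=0$. Diagrams: row $i$ has $\alpha_i$ left-justified boxes, rows numbered top to bottom. A word $w=\mathfrak t_{i_1}\cdots\mathfrak t_{i_n}$ acts by $w(\alpha)=\mathfrak t_{i_1}(\cdots\mathfrak t_{i_n}(\alpha))$. It is a reverse $k$-hookword if $i_1\le\cdots\le i_{k+1}>i_{k+2}>\cdots>i_n$ ($0\le k\le n-1$), and then $\mathrm{leg}(w)=\{i_{k+1},\dots,i_n\}$. $\mathrm{supp}(w)=\{i_1,\dots,i_n\}$; $w$ is connected if $\mathrm{supp}(w)$ is a set of consecutive integers; $CRHW_n$ is the set of connected reverse hookwords of length $n$. If $w(\alpha)=\beta\ne0$, applying $\mathfrak t_{i_n},\dots,\mathfrak t_{i_1}$ successively adds one box at each step (the box added by $\mathfrak t_{i_m}$ is in column $i_m$); $\tau_w$ is the filling of the set of added boxes in which the box added by $\mathfrak t_{i_m}$ has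 entry $m$. *)

From mathcomp Require Import all_boot.
Set Implicit Arguments. Unset Strict Implicit. Unset Printing Implicit Defensive.

(* A composition: a finite sequence of positive integers (row i has alpha_i boxes). *)
Definition composition (a : seq nat) : bool := all (fun x => 0 < x) a.

(* Box-adding operator t_i; [None] plays the role of 0. Operators are indexed
   by i >= 1; t_0 is not an operator and is sent to None. *)
Definition t (i : nat) (a : seq nat) : option (seq nat) :=
  if i == 1 then Some (1 :: a)
  else if i is 0 then None
  else let r := find (pred1 i.-1) a in
       if r < size a then Some (set_nth 0 a r i) else None.

Definition topt (i : nat) (a : option (seq nat)) : option (seq nat) := obind (t i) a.

(* w = t_{i_1} ... t_{i_n}, w(alpha) = t_{i_1}( ... t_{i_n}(alpha)) *)
Definition act (w : seq nat) (a : seq nat) : option (seq nat) :=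
  foldr topt (Some a) w.

(* Boxes are triples (row, column, entry), rows and columns 1-indexed,
   rows numbered top to bottom in the current diagram. When t_1 adds a new
   top row, previously added boxes move down one row. *)
Definition shift_rows (bs : seq (nat * nat * nat)) : seq (nat * nat * nat) :=
  [seq ((b.1.1).+1, b.1.2, b.2) | b <- bs].

Definition added_box (i : nat) (a : seq nat) : nat * nat :=
  if i == 1 then (1, 1) else ((find (pred1 i.-1) a).+1, i).

Definition step (i m : nat) (st : option (seq nat * seq (nat * nat * nat)))
  : option (seq nat * seq (nat * nat * nat)) :=
  if st is Some (a, bs) then
    match t i a with
    | Some a' =>
        let bs' := if i == 1 then shift_rows bs else bs in
        Some (a', (added_box i a, m) :: bs')
    | None => None
    end
  else None.

(* Applies t_{i_n}, ..., t_{i_1} successively; the box added by t_{i_m}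
   gets entry m. *)
Definition run (w : seq nat) (a : seq nat) : option (seq nat * seq (nat * nat * nat)) :=
  foldr (fun p st => step p.2 p.1 st) (Some (a, [::])) (zip (iota 1 (size w)) w).

(* tau_w : the filling of the added boxes (meaningful when w(alpha) <> 0). *)
Definition tau (w : seq nat) (a : seq nat) : seq (nat * nat * nat) :=
  if run w a is Some (_, bs) then bs else [::].

Definition col_entries (f : seq (nat * nat * nat)) (c : nat) : seq nat :=
  [seq b.2 | b <- f & b.1.2 == c].

(* w = t_{i_1}...t_{i_n} is a reverse k-hookword:
   i_1 <= ... <= i_{k+1} > i_{k+2} > ... > i_n, with 0 <= k <= n-1.
   (Letters are operator indices, hence >= 1.) *)
Definition rev_hookword_at (w : seq nat) (k : nat) : bool :=
  [&& all (fun i => 0 < i) w, k < size w,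
      sorted leq (take k.+1 w) & sorted (fun x y => y < x) (drop k w)].

Definition leg (w : seq nat) (k : nat) : seq nat := drop k w.

Definition connected (w : seq nat) : Prop :=
  forall a b x, a \in w -> b \in w -> a <= x <= b -> x \in w.

(* Read backwards from the end of the word, the run of w = t_{i_1}...t_{i_n}
   gives the box added by t_{i_m} the entry m and puts it in column i_m, so
   column c of tau_w holds exactly the positions m with i_m = c.  If j is not
   in the leg, every occurrence of j lies in the weakly increasing part
   i_1 <= ... <= i_k strictly before the leg; an occurrence of j + 1 is either
   in the leg, hence later, or also in the weakly increasing part, where a
   larger letter comes later. *)

From mathcomp Require Import all_boot.

Set Implicit Arguments.
Unset Strict Implicit.
Unset Printing Implicit Defensive.

Definition run_from (s : nat) (w a : seq nat) :=
  foldr (fun p st => step p.2 p.1 st) (Some (a, [::])) (zip (iota s (size w)) w).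

(* Shifting rows when t_1 adds a top row changes neither columns nor entries,
   so only those two coordinates are tracked. *)
Lemma run_from_boxes s w a a' bs b :
  run_from s w a = Some (a', bs) -> b \in bs ->
  exists2 m, m < size w & b.2 = s + m /\ nth 0 w m = b.1.2.
Proof.
elim: w s a' bs b => [|x w IH] s a' bs b; first by case=> _ <-.
rewrite /run_from /= -/(run_from s.+1 w a) /step -/step.
case E: (run_from s.+1 w a) => [[a0 bs0]|] //.
case: (t x a0) => // a1 [_ <-]; rewrite inE => /orP [/eqP -> | Hb].
  exists 0 => //=; rewrite addn0; split=> //.
  by rewrite /added_box; case: eqP => [->|].
have [m Hm [-> Hcol]] : exists2 m, m < size w & b.2 = s.+1 + m /\ nth 0 w m = b.1.2.
  case: (x == 1) Hb => [|Hb]; last exact: IH E Hb.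
  by rewrite /shift_rows => /mapP [b' Hb' ->]; exact: IH E Hb'.
by exists m.+1; rewrite // addSnnS.
Qed.

Lemma mem_col_entries_tau w a c e :
  e \in col_entries (tau w a) c -> exists2 m, m < size w & e = m.+1 /\ nth 0 w m = c.
Proof.
rewrite /col_entries /tau /run -/(run_from 1 w a).
case E: (run_from 1 w a) => [[a' bs]|] // /mapP [b].
rewrite mem_filter => /andP [/eqP <- Hb] ->.
by have [m Hm [-> ?]] := run_from_boxes E Hb; exists m.
Qed.

Lemma sorted_leq_nth_ltn (s : seq nat) i j :
  sorted leq s -> i < size s -> j < size s -> nth 0 s i < nth 0 s j -> i < j.
Proof.
move=> s_sorted i_lt j_lt; apply: contraTT; rewrite -!leqNgt => le_ji.
exact: (sorted_leq_nth leq_trans leqnn 0 s_sorted).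
Qed.

Lemma notin_drop_ltn (w : seq nat) k m :
  m < size w -> nth 0 w m \notin drop k w -> m < k.
Proof.
move=> m_lt; apply: contraR; rewrite -leqNgt => le_km.
by rewrite -(subnKC le_km) -nth_drop mem_nth // size_drop ltn_sub2r // (leq_ltn_trans le_km).
Qed.

Lemma rev_hookword_nth_ltn w k m1 m2 :
  rev_hookword_at w k -> m1 < k -> nth 0 w m1 < nth 0 w m2 -> m1 < m2.
Proof.
case/and4P=> _ k_lt prefix_sorted _ m1_lt lt_nth.
have [m2_lt | le_km2] := ltnP m2 k; last exact: leq_trans m1_lt le_km2.
have size_prefix : size (take k.+1 w) = k.+1 by rewrite size_take_min; exact/minn_idPl.
have in_prefix i : i < k -> i < size (take k.+1 w) by rewrite size_prefix => /ltnW.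
apply: (sorted_leq_nth_ltn prefix_sorted (in_prefix _ m1_lt) (in_prefix _ m2_lt)).
by rewrite !nth_take // ltnS ltnW.
Qed.

Theorem mainTheorem8 (alpha beta w : seq nat) (k j : nat) :
  composition alpha ->
  rev_hookword_at w k -> connected w ->
  act w alpha = Some beta ->
  1 <= j -> j \in w -> (exists2 b, b \in w & j < b) ->
  j \notin leg w k ->
  forall e1 e2, e1 \in col_entries (tau w alpha) j ->
                e2 \in col_entries (tau w alpha) j.+1 -> e1 < e2.
Proof.
move=> _ hook _ _ _ _ _ j_notin_leg e1 e2.
move=> /mem_col_entries_tau [m1 m1_lt [-> w_m1]].
move=> /mem_col_entries_tau [m2 _ [-> w_m2]].
have m1_lt_k : m1 < k by apply: notin_drop_ltn m1_lt _; rewrite w_m1.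
by rewrite ltnS (rev_hookword_nth_ltn hook m1_lt_k) // w_m1 w_m2.
Qed.
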